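(* Let $R$ be an exchange ring and $\alpha=[a_1\ a_2\ \cdots\ a_n]$ a right unimodular row over $R$ (i.e. $a_1R+\cdots+a_nR=R$), with $n\ge 2$. Then $\alpha$ can be transformed by a finite sequence of elementary column operations to a row $[c_1\ c_2\ \cdots\ c_n]$ such that $c_2$ is a (von Neumann) regular element, $c_2\in Ra_2$, and $c_2R=(1-g)R$ for some idempotent $g\in R$ with $RgR=R$.
   Context: All rings are unital. A ring $R$ is an exchange ring if for every $a\in R$ there is an idempotent $e\in aR$ with $1-e\in(1-a)R$ (equivalently, $R_R$ has the finite exchange property). An element $x\in R$ is regular if $xyx=x$ for some $y\in R$. An elementary column operation on a row $[c_1\ \cdots\ c_n]$ replaces some entry $c_i$ by $c_i+c_jr$ for some $j\neq i$ and $r\in R$. *)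

From HB Require Import structures.
From mathcomp Require Import all_boot all_order all_algebra.
From Stdlib Require Import Relation_Operators.
Set Implicit Arguments. Unset Strict Implicit. Unset Printing Implicit Defensive.
Import GRing.Theory.
Local Open Scope ring_scope.

Definition in_rideal (R : pzRingType) (a x : R) : Prop := exists r, x = a * r.
Definition in_lideal (R : pzRingType) (a x : R) : Prop := exists r, x = r * a.

Definition idem (R : pzRingType) (e : R) : Prop := e * e = e.

Definition exchange_ring (R : pzRingType) : Prop :=
  forall a : R, exists e : R,
    [/\ idem e, in_rideal a e & in_rideal (1 - a) (1 - e)].

Definition regular (R : pzRingType) (x : R) : Prop := exists y, x * y * x = x.

Definition right_unimodular (R : pzRingType) (n : nat) (a : 'rV[R]_n) : Prop :=
  exists b : 'I_n -> R, \sum_(i < n) a 0 i * b i = 1.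

Definition elem_col_op (R : pzRingType) (n : nat) (c d : 'rV[R]_n) : Prop :=
  exists (i j : 'I_n) (r : R),
    i != j /\ d = \row_k (if k == i then c 0 i + c 0 j * r else c 0 k).

Definition col_reachable (R : pzRingType) (n : nat) : 'rV[R]_n -> 'rV[R]_n -> Prop :=
  clos_refl_trans _ (@elem_col_op R n).

(* the two-sided ideal RgR equals R: 1 = sum_i x_i g y_i *)
Definition full_idempotent_ideal (R : pzRingType) (g : R) : Prop :=
  exists (m : nat) (x y : 'I_m -> R), \sum_(i < m) x i * g * y i = 1.

Definition same_rideal (R : pzRingType) (x y : R) : Prop :=
  in_rideal y x /\ in_rideal x y.

(* Split the unimodular relation at b = a_2 as b u + y = 1 with y = sum_(j <> 2) a_j beta_j.
   The exchange property at b u gives an idempotent e = b t with 1 - e in yR, so the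
   entries p_j = (1 - e) a_j admit s_j in R(1 - e) with sum_j p_j s_j = 1 - e, and adding
   multiples of b replaces each a_j (j <> 2) by (1 - e) a_j + e r_j.  A second use of the
   exchange property, in the corner eRe and at e (1 - s_1 p_1), yields an idempotent
   f <= e such that g = 1 - e + f is full (1 - g = e - f lies in R g R) and is a right
   combination sum_j y_j m_j of the new entries.  Subtracting (sum_j y_j m_j) b from b
   leaves c_2 = (1 - g) b, which is regular and generates (1 - g)R because
   1 - g = (1 - g) e = c_2 t. *)

From HB Require Import structures.
From mathcomp Require Import all_boot all_order all_algebra.
From Stdlib Require Import Relation_Operators.
Set Implicit Arguments. Unset Strict Implicit. Unset Printing Implicit Defensive.
Import GRing.Theory.
Local Open Scope ring_scope.

Section ColumnOperations.
Variables (R : pzRingType) (m : nat).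
Implicit Types (c : 'rV[R]_m) (i j : 'I_m) (r : 'I_m -> R).

Lemma col_reachable_step c i j (x : R) : i != j ->
  col_reachable c (\row_k (if k == i then c 0 i + c 0 j * x else c 0 k)).
Proof. by move=> neq_ij; apply: rt_step; exists i, j, x. Qed.

Lemma col_reachable_add_multiples c i r :
  col_reachable c (\row_k (if k == i then c 0 k else c 0 k + c 0 i * r k)).
Proof.
pose d (l : seq 'I_m) := \row_k (if (k != i) && (k \in l) then c 0 k + c 0 i * r k else c 0 k).
suff reach_d l : col_reachable c (d l).
  have -> : \row_k (if k == i then c 0 k else c 0 k + c 0 i * r k) = d (enum 'I_m).
    by apply/rowP => k; rewrite !mxE mem_enum andbT; case: eqP.
  exact: reach_d.
elim: l => [|j l IHl].
  have -> : d [::] = c by apply/rowP => k; rewrite mxE andbF.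
  exact: rt_refl.
have [skip_j | /norP[neq_ji /negbTE notin_l]] := boolP ((j == i) || (j \in l)).
  have -> : d (j :: l) = d l.
    apply/rowP => k; rewrite !mxE in_cons.
    by case: (eqVneq k j) => [->|] //=; case/orP: skip_j => [/eqP->|->]; rewrite ?eqxx ?andbT.
  exact: IHl.
have -> : d (j :: l) = \row_k (if k == j then d l 0 j + d l 0 i * r j else d l 0 k).
  apply/rowP => k; rewrite !mxE in_cons eqxx notin_l andbF /=.
  by case: (eqVneq k j) => [->|] /=; rewrite ?neq_ji.
apply: rt_trans IHl _; exact: col_reachable_step.
Qed.

Lemma col_reachable_add_combination c i r :
  col_reachable c (\row_k (if k == i then c 0 i + \sum_(j | j != i) c 0 j * r j
                           else c 0 k)).
Proof.
pose d (l : seq 'I_m) := \row_k (if k == i then c 0 i + \sum_(j <- l | j != i) c 0 j * r j else c 0 k).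
suff reach_d l : col_reachable c (d l) by exact: reach_d.
elim: l => [|j l IHl].
  have -> : d [::] = c by apply/rowP => k; rewrite mxE big_nil addr0; case: eqP => // ->.
  exact: rt_refl.
rewrite /d big_cons; case: ifP => neq_ji; last exact: IHl.
have -> : \row_k (if k == i then c 0 i + (c 0 j * r j + \sum_(j <- l | j != i) c 0 j * r j)
                  else c 0 k) = \row_k (if k == i then d l 0 i + d l 0 j * r j else d l 0 k).
  apply/rowP => k; rewrite !mxE eqxx (negbTE neq_ji).
  by case: ifP => // _; rewrite addrCA addrC.
apply: rt_trans IHl _; apply: col_reachable_step; by rewrite eq_sym.
Qed.

Lemma col_reachable_corner c i (t e : R) r (mu : 'I_m -> R) : c 0 i * t = e ->
  col_reachable c
    (\row_k (if k == i then (1 - \sum_(j | j != i) ((1 - e) * c 0 j + e * r j) * mu j) * c 0 i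
             else (1 - e) * c 0 k + e * r k)).
Proof.
move=> def_e.
pose d := \row_k (if k == i then c 0 k else c 0 k + c 0 i * (t * (r k - c 0 k))).
have d_i : d 0 i = c 0 i by rewrite mxE eqxx.
have d_j j : j != i -> d 0 j = (1 - e) * c 0 j + e * r j.
  move=> neq_ji; rewrite mxE (negbTE neq_ji) mulrA def_e mulrBr mulrBl mul1r.
  by rewrite addrCA addrC.
apply: rt_trans (col_reachable_add_multiples c i (fun k => t * (r k - c 0 k))) _.
rewrite -/d.
have -> : \row_k (if k == i then (1 - \sum_(j | j != i) ((1 - e) * c 0 j + e * r j) * mu j) * c 0 i
                  else (1 - e) * c 0 k + e * r k)
          = \row_k (if k == i then d 0 i + \sum_(j | j != i) d 0 j * - (mu j * c 0 i)
                    else d 0 k).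
  apply/rowP => k; rewrite [LHS]mxE [RHS]mxE.
  case: (eqVneq k i) => [_|neq_ki]; last by rewrite d_j.
  rewrite d_i mulrBl mul1r mulr_suml -sumrN.
  by congr (_ + _); apply: eq_bigr => j neq_ji; rewrite d_j // mulrN mulrA.
exact: col_reachable_add_combination.
Qed.

End ColumnOperations.

Section ExchangeRings.
Variable R : pzRingType.
Implicit Types (b e f g h q t u y : R).

Lemma idem1B e : idem e -> idem (1 - e).
Proof. by rewrite /idem => idem_e; rewrite mulrBl mul1r mulrBr mulr1 idem_e subrr subr0. Qed.

Lemma idemB e f : idem e -> idem f -> e * f = f -> f * e = f -> idem (e - f).
Proof.
rewrite /idem => idem_e idem_f ef fe.
by rewrite mulrBl !mulrBr idem_e idem_f ef fe subrr subr0.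
Qed.

Lemma full_idempotent_ideal_compl g (x y : R) : 1 - g = x * g * y -> full_idempotent_ideal g.
Proof.
move=> def_1g.
exists 2, (fun k : 'I_2 => if val k == 0 then 1 else x),
          (fun k : 'I_2 => if val k == 0 then 1 else y).
by rewrite big_ord_recl big_ord1 /= mul1r mulr1 -def_1g addrC subrK.
Qed.

Lemma regular_idem_mul h b t : idem h -> h * (b * t) = h -> regular (h * b).
Proof. by move=> idem_h hbt; exists t; rewrite -[h * b * t]mulrA hbt mulrA idem_h. Qed.

Lemma same_rideal_idem_mul h b t : h * (b * t) = h -> same_rideal (h * b) h.
Proof. by move=> hbt; split; [exists b | exists t; rewrite -mulrA hbt]. Qed.

Lemma sum_corner_combination (I : finType) (P : pred I) (j0 : I) (p s : I -> R) e f w :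
  P j0 -> (forall j, s j * e = 0) -> (1 - e) * p j0 = p j0 ->
  \sum_(j | P j) p j * s j = 1 - e -> f * (1 - s j0 * p j0) * w = f ->
  exists r mu : I -> R, \sum_(j | P j) (p j + f * r j) * mu j = 1 - e + f.
Proof.
move=> Pj0 se ep sum_ps fw.
(* [r] is orthogonal to [s], and the [j0]-part of [mu] adds [f] to [1 - e]. *)
have sum_at_j0 (F : I -> R) : (forall j, j != j0 -> F j = 0) -> \sum_(j | P j) F j = F j0.
  by move=> F0; rewrite (bigD1 j0) //= big1 ?addr0 // => j /andP[_ /F0].
pose delta j : R := if j == j0 then 1 else 0.
have delta0 j : j != j0 -> delta j = 0 by rewrite /delta => /negbTE->.
pose r j := delta j - s j0 * p j.
pose y j := p j + f * r j.
have sum_rs : \sum_(j | P j) r j * s j = 0.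
  rewrite (eq_bigr (fun j => delta j * s j - s j0 * (p j * s j))); last first.
    by move=> j _; rewrite mulrBl mulrA.
  rewrite sumrB -mulr_sumr sum_ps sum_at_j0; last by move=> j /delta0->; rewrite mul0r.
  by rewrite /delta eqxx mul1r mulrBr mulr1 se subr0 subrr.
have sum_ys : \sum_(j | P j) y j * s j = 1 - e.
  rewrite (eq_bigr (fun j => p j * s j + f * (r j * s j))); last first.
    by move=> j _; rewrite mulrDl mulrA.
  by rewrite big_split /= -mulr_sumr sum_rs mulr0 addr0 sum_ps.
exists r, (fun j => s j * (1 - p j0 * w) + delta j * w).
rewrite (eq_bigr (fun j => y j * s j * (1 - p j0 * w) + y j * delta j * w)); last first.
  by move=> j _; rewrite mulrDr !mulrA.
rewrite big_split /= -mulr_suml sum_ys sum_at_j0; last by move=> j /delta0->; rewrite mulr0 mul0r.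
rewrite /y /r /delta eqxx mulr1 [(p j0 + _) * w]mulrDl fw mulrBr mulr1 mulrA ep.
by rewrite addrA subrK.
Qed.

Hypothesis exR : exchange_ring R.

Lemma exchange_idem_split b u y : b * u + y = 1 ->
  exists e t v, [/\ idem e, b * t = e & y * v = 1 - e].
Proof.
move=> split1; have [e [idem_e [x def_e] [v def_1e]]] := exR (b * u).
exists e, (u * x), v; split => //; first by rewrite mulrA.
by rewrite def_1e -split1 [b * u + y]addrC addrK.
Qed.

Lemma exchange_corner_idem e q : idem e ->
  exists f, [/\ idem f, e * f = f, f * e = f,
                in_rideal (f * q) f & in_rideal (e * (1 - q)) (e - f)].
Proof.
rewrite /idem => idem_e.
have [f0 [idem_f0 [w def_f0] [v def_1f0]]] := exR (e * q).
have ef0 : e * f0 = f0 by rewrite def_f0 !mulrA idem_e.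
exists (f0 * e); split.
- by rewrite /idem mulrA -[f0 * e * f0]mulrA ef0 idem_f0.
- by rewrite mulrA ef0.
- by rewrite -mulrA idem_e.
- exists (w * e).
  have -> : f0 * e * q * (w * e) = f0 * (e * q * w) * e by rewrite !mulrA.
  by rewrite -def_f0 idem_f0.
- exists (v * e).
  have -> : e - f0 * e = e * (1 - f0) * e by rewrite mulrBr mulr1 ef0 mulrBl idem_e.
  have e1eq : e * (1 - e * q) = e * (1 - q) by rewrite !mulrBr mulrA idem_e.
  by rewrite def_1f0 !mulrA e1eq.
Qed.

Lemma exchange_unimodular_corner (I : finType) (P : pred I) (j0 : I) (a beta : I -> R) b u :
  P j0 -> b * u + \sum_(j | P j) a j * beta j = 1 ->
  exists e t g (r mu : I -> R),
    [/\ b * t = e, idem g, full_idempotent_ideal g, (1 - g) * e = 1 - g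
       & \sum_(j | P j) ((1 - e) * a j + e * r j) * mu j = g].
Proof.
move=> Pj0 split1.
have [e [t [v [idem_e bt yv]]]] := exchange_idem_split split1.
have idem_1e := idem1B idem_e.
pose p j := (1 - e) * a j.
pose s j := beta j * v * (1 - e).
have se j : s j * e = 0 by rewrite -mulrA mulrBl mul1r idem_e subrr mulr0.
have ep j : (1 - e) * p j = p j by rewrite mulrA idem_1e.
have sum_ps : \sum_(j | P j) p j * s j = 1 - e.
  rewrite (eq_bigr (fun j => (1 - e) * (a j * beta j) * (v * (1 - e)))); last first.
    by move=> j _; rewrite !mulrA.
  by rewrite -mulr_suml -mulr_sumr mulrA -(mulrA _ _ v) yv !idem_1e.
have [f [idem_f ef fe [w fw] [v' efv]]] := exchange_corner_idem (1 - s j0 * p j0) idem_e.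
have [r [mu sum_mu]] := sum_corner_combination Pj0 se (ep j0) sum_ps (esym fw).
have gp : (1 - (e - f)) * p j0 = p j0.
  have e1e : e * (1 - e) = 0 by rewrite mulrBr mulr1 idem_e subrr.
  have f1e : f * (1 - e) = 0 by rewrite mulrBr mulr1 fe subrr.
  by rewrite mulrBl mul1r mulrBl /p !mulrA e1e f1e !mul0r subrr subr0.
exists e, t, (1 - (e - f)), (fun j => f * r j), mu; split => //.
- exact/idem1B/idemB.
- apply: (@full_idempotent_ideal_compl _ (e * s j0) (p j0 * v')).
  have -> : e * s j0 * (1 - (e - f)) * (p j0 * v') = e * s j0 * ((1 - (e - f)) * p j0) * v'.
    by rewrite !mulrA.
  by rewrite gp subKr efv subKr !mulrA.
- by rewrite subKr mulrBl idem_e fe.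
- rewrite (eq_bigr (fun j => (p j + f * r j) * mu j)); last by move=> j _; rewrite mulrA ef.
  by rewrite sum_mu opprB addrA addrAC.
Qed.

End ExchangeRings.

Theorem corollary2p6 (R : pzRingType) (n : nat) (a : 'rV[R]_n.+2) :
  exchange_ring R -> right_unimodular a ->
  exists c : 'rV[R]_n.+2,
    col_reachable a c /\
    [/\ regular (c 0 (inord 1)),
        in_lideal (a 0 (inord 1)) (c 0 (inord 1)) &
        exists g : R, [/\ idem g, full_idempotent_ideal g &
                          same_rideal (c 0 (inord 1)) (1 - g)]].
Proof.
move=> exR [beta sum_beta].
set i : 'I_n.+2 := inord 1.
have neq_0i : (ord0 : 'I_n.+2) != i by rewrite -val_eqE /= inordK.
have split1 : a 0 i * beta i + \sum_(j | j != i) a 0 j * beta j = 1.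
  by move: sum_beta; rewrite (bigD1 i).
have [e [t [g [r [mu [bt idem_g full_g ge sum_g]]]]]] :=
  exchange_unimodular_corner exR (P := fun j => j != i) (a := fun j => a 0 j) neq_0i split1.
eexists; split; first exact: col_reachable_corner r mu bt.
rewrite mxE eqxx sum_g.
have hbt : (1 - g) * (a 0 i * t) = 1 - g by rewrite bt ge.
split.
- exact: regular_idem_mul (idem1B idem_g) hbt.
- by exists (1 - g).
- by exists g; split=> //; exact: same_rideal_idem_mul hbt.
Qed.
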